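(* Let $k\ge1$, and let $\mathcal P=\{p_1,\dots,p_{k^2}\}$ be a family of real polynomials in the commuting variables $x_1,\dots,x_{2k^2}$ admitting an nc representation $p(X,Y)$ of degree $d>1$. Suppose at least one polynomial of the family contains a term $e\,x_i^sx_j^t$ with $e\ne0$, $t\ge2$ and $s\ge t+2$. Then: (1) there is $a\in\{1,\dots,k\}$ such that one of $x_i,x_j$ is the $(a,a)$ entry of $X$ and the other is the $(a,a)$ entry of $Y$; (2) for each $n\in\{1,\dots,k\}$, letting $x_{i_n}$ be the $(n,n)$ entry of the matrix (among $X,Y$) containing $x_i$ and $x_{j_n}$ the $(n,n)$ entry of the other matrix, the polynomial in position $(n,n)$ of the array $p(X,Y)$ contains the term $e\,x_{i_n}^sx_{j_n}^t$; thus there are exactly $k$ such diagonal pairs and $k$ polynomials $p_{\ell_1},\dots,p_{\ell_k}$ with $p_{\ell_n}=e\,x_{i_n}^sx_{j_n}^t+\cdots$, each occupying the same diagonal position as $x_{i_n}$ and $x_{j_n}$.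
   Context: The family $\mathcal P$ admits an nc representation $p(X,Y)$ if there are $k\times k$ matrices $X,Y$ whose $2k^2$ entries are the variables $x_1,\dots,x_{2k^2}$, each used exactly once, and a noncommutative polynomial $p$ in two letters with real coefficients such that the matrix $p(X,Y)$ is a $k\times k$ array whose entries are $p_1,\dots,p_{k^2}$, each exactly once. A ''term'' means a monomial with its nonzero coefficient after collecting like terms. *)

From mathcomp Require Import all_boot all_algebra.
From mathcomp Require Import mpoly.
From mathcomp Require Import reals.
Set Implicit Arguments. Unset Strict Implicit. Unset Printing Implicit Defensive.
Import GRing.Theory.
Local Open Scope ring_scope.

(* Noncommutative polynomials in two letters X (false) and Y (true) with
   coefficients in R: a coefficient function on words (seq bool) whose support
   is contained in the words of length <= ncbound. *)
Record ncpoly (R : nzRingType) := NCPoly {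
  nccoef : seq bool -> R;
  ncbound : nat;
  nccoef_bound : forall w, (ncbound < size w)%N -> nccoef w = 0 }.

Definition ncdeg (R : nzRingType) (p : ncpoly R) : nat :=
  (\max_(m < (ncbound p).+1 | [exists w : m.-tuple bool, nccoef p w != 0%R]) m)%N.

Definition ncword_eval (S : pzRingType) (k : nat) (X Y : 'M[S]_k)
  (w : seq bool) : 'M[S]_k :=
  foldr (fun b M => (if b then Y else X) *m M) 1%:M w.

Definition nceval (R : realType) (n k : nat) (p : ncpoly R)
  (X Y : 'M[{mpoly R[n]}]_k) : 'M[{mpoly R[n]}]_k :=
  \sum_(m < (ncbound p).+1) \sum_(w : m.-tuple bool)
     (nccoef p w)%:MP *: ncword_eval X Y w.

(* Generic matrices: [pos (b, r, c)] is the index of the variable placed at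
   entry (r, c) of X (b = false) or of Y (b = true). *)
Definition varmx (R : realType) (n k : nat) (pos : bool * 'I_k * 'I_k -> 'I_n)
  (b : bool) : 'M[{mpoly R[n]}]_k :=
  \matrix_(r, c) 'X_(pos (b, r, c)).

Definition ncrep (R : realType) (k : nat) (pos : bool * 'I_k * 'I_k -> 'I_(2 * k ^ 2))
  (p : ncpoly R) : 'M[{mpoly R[2 * k ^ 2]}]_k :=
  nceval p (varmx R pos false) (varmx R pos true).

Definition mono2 (n : nat) (i j : 'I_n) (s t : nat) : 'X_{1..n} :=
  (U_(i) *+ s + U_(j) *+ t)%MM.

(* Read the variable at entry (r, c) of X or Y as an edge r -> c of a graph on
   {1..k}. A monomial occurring in entry (r0, c0) of p(X,Y) comes from a word,
   and is the edge multiset of a walk from r0 to c0, so at every vertex the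
   out- and in-degrees agree up to the endpoints. For x_i^s x_j^t with t >= 2
   and s >= t + 2 this forces both edges to be loops, and connectedness of the
   walk puts them at the same vertex a = r0 = c0. For every vertex n, the
   coefficient of the corresponding product of the two (n, n) entries in
   entry (n, n) of p(X,Y) only counts the words with s letters of one kind and
   t of the other, so it does not depend on n. *)

From mathcomp Require Import all_boot all_algebra.
From mathcomp Require Import mpoly.
From mathcomp Require Import reals.
From mathcomp Require Import zify.
Set Implicit Arguments. Unset Strict Implicit. Unset Printing Implicit Defensive.
Import GRing.Theory Num.Theory.
Local Open Scope ring_scope.

Lemma sum_neq0 (R : nzRingType) (I : finType) (F : I -> R) :
  \sum_i F i != 0 -> exists i, F i != 0.
Proof.
move=> sumF; have /existsP[i Fi] : [exists i, F i != 0]; last by exists i.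
apply: contraNT sumF; rewrite negb_exists => /forallP F0.
by rewrite big1 // => i _; apply/eqP/negPn/F0.
Qed.

Lemma mcoeffXM (R : nzRingType) n (x : 'I_n) (q : {mpoly R[n]}) m :
  ('X_x * q)@_m = if (U_(x) <= m)%MM then q@_(m - U_(x)) else 0.
Proof.
rewrite -commr_mpolyX; case: ifP => xm.
  by rewrite -{1}(submK xm) addmC mcoeffMX.
apply/eqP; rewrite mcoeff_eq0 (perm_mem (msuppMX _ _)).
by apply/mapP => -[m' _ mE]; move: xm; rewrite mE lem_addr.
Qed.

Lemma mono2E n (u v z : 'I_n) a b :
  mono2 u v a b z = (a * (u == z) + b * (v == z))%N.
Proof. by rewrite /mono2 mnmDE !mulmnE !mnm1E mulnC [(b * _)%N]mulnC. Qed.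

Lemma mono2_eq0 n (u v : 'I_n) a b :
  (mono2 u v a b == 0%MM) = (a == 0%N) && (b == 0%N).
Proof.
apply/eqP/andP => [m0|[/eqP-> /eqP->]]; last by apply/mnmP => z; rewrite mono2E mnm0E.
have := congr1 (fun m : 'X_{1..n} => m u) m0; have := congr1 (fun m : 'X_{1..n} => m v) m0.
by rewrite /= !mono2E !mnm0E !eqxx; case: (u == v); case: (v == u) => /=; split; apply/eqP; lia.
Qed.

Lemma lep1_mono2 n (u v x : 'I_n) a b :
  (U_(x) <= mono2 u v a b)%MM = ((u == x) && (0 < a)%N) || ((v == x) && (0 < b)%N).
Proof. by rewrite lep1mP mono2E; case: (u == x); case: (v == x) => /=; lia. Qed.

Lemma mono2_subl n (u v : 'I_n) a b :
  (mono2 u v a.+1 b - U_(u))%MM = mono2 u v a b.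
Proof.
by apply/mnmP => z; rewrite mnmBE !mono2E mnm1E; case: (u == z); case: (v == z) => /=; lia.
Qed.

Lemma mono2_subr n (u v : 'I_n) a b :
  (mono2 u v a b.+1 - U_(v))%MM = mono2 u v a b.
Proof.
by apply/mnmP => z; rewrite mnmBE !mono2E mnm1E; case: (u == z); case: (v == z) => /=; lia.
Qed.

Section WordWalks.
Variables (R : realType) (n k : nat) (pos : bool * 'I_k * 'I_k -> 'I_n).
Hypothesis pos_inj : injective pos.

Local Notation wordmx w := (ncword_eval (varmx R pos false) (varmx R pos true) w).

Lemma mcoeff_wordmx_nil r c m :
  (wordmx [::] r c)@_m = ((r == c) && (m == 0%MM))%:R.
Proof.
by rewrite /= mxE mcoeffMn mcoeff1; case: (r == c); case: (m == 0%MM).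
Qed.

Lemma mcoeff_wordmx_cons b w r c m :
  (wordmx (b :: w) r c)@_m = \sum_l (if (U_(pos (b, r, l)) <= m)%MM then
      (wordmx w l c)@_(m - U_(pos (b, r, l))) else 0).
Proof.
rewrite /= mxE raddf_sum; apply: eq_bigr => l _.
by rewrite -mcoeffXM; case: b; rewrite /varmx mxE.
Qed.

Lemma mcoeff_wordmx_cons_neq0 b w r c m :
  (wordmx (b :: w) r c)@_m != 0 -> exists l,
    (U_(pos (b, r, l)) <= m)%MM /\ (wordmx w l c)@_(m - U_(pos (b, r, l))) != 0.
Proof.
rewrite mcoeff_wordmx_cons => /sum_neq0[l]; case: ifP => [lem nz|]; last by rewrite eqxx.
by exists l.
Qed.

Definition out_deg (m : 'X_{1..n}) (v : 'I_k) : nat :=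
  (\sum_(x : bool * 'I_k * 'I_k | x.1.2 == v) m (pos x))%N.
Definition in_deg (m : 'X_{1..n}) (v : 'I_k) : nat :=
  (\sum_(x : bool * 'I_k * 'I_k | x.2 == v) m (pos x))%N.

Lemma sum_mnm1_pos (P : pred (bool * 'I_k * 'I_k)) y :
  (\sum_(x | P x) U_(pos y)%MM (pos x) = P y)%N.
Proof.
under eq_bigr => x _ do rewrite mnm1E (inj_eq pos_inj).
case Py: (P y).
  by rewrite (bigD1 y) //= eqxx big1 ?addn0 // => x /andP[_ /negPf]; rewrite eq_sym => ->.
by rewrite big1 // => x Px; case: eqP => // yx; move: Py; rewrite yx Px.
Qed.

Lemma sum_mnm_sub1 (P : pred (bool * 'I_k * 'I_k)) y (m : 'X_{1..n}) :
  (U_(pos y) <= m)%MM ->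
  (\sum_(x | P x) m (pos x) = \sum_(x | P x) (m - U_(pos y))%MM (pos x) + P y)%N.
Proof.
move=> ym; rewrite -{1}(submK ym) -(sum_mnm1_pos P y) -big_split /=.
by apply: eq_bigr => x _; rewrite mnmDE.
Qed.

Lemma sum_mono2_pos (P : pred (bool * 'I_k * 'I_k)) y1 y2 a b :
  (\sum_(x | P x) mono2 (pos y1) (pos y2) a b (pos x) = a * P y1 + b * P y2)%N.
Proof.
rewrite -!sum_mnm1_pos !big_distrr -big_split /=; apply: eq_bigr => x _.
by rewrite /mono2 mnmDE !mulmnE mulnC [(_ * b)%N]mulnC.
Qed.

Lemma out_deg_mono2 y1 y2 a b v :
  out_deg (mono2 (pos y1) (pos y2) a b) v = (a * (y1.1.2 == v) + b * (y2.1.2 == v))%N.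
Proof. exact: sum_mono2_pos. Qed.

Lemma in_deg_mono2 y1 y2 a b v :
  in_deg (mono2 (pos y1) (pos y2) a b) v = (a * (y1.2 == v) + b * (y2.2 == v))%N.
Proof. exact: sum_mono2_pos. Qed.

Lemma mcoeff_wordmx_balance w : forall r c m, (wordmx w r c)@_m != 0 ->
  forall v, (out_deg m v + (c == v) = in_deg m v + (r == v))%N.
Proof.
elim: w => [|b w IH] r c m.
  rewrite mcoeff_wordmx_nil pnatr_eq0 eqb0 negbK => /andP[/eqP-> /eqP->] v.
  by rewrite /out_deg /in_deg !big1 // => x _; rewrite mnm0E.
case/mcoeff_wordmx_cons_neq0 => l [lem /IH balance] v.
rewrite /out_deg /in_deg !(sum_mnm_sub1 _ lem) /=.
by rewrite addnAC; move: (balance v); rewrite /out_deg /in_deg => ->.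
Qed.

Lemma mcoeff_wordmx_loops w : forall r c m, (wordmx w r c)@_m != 0 ->
  (forall x, (0 < m (pos x))%N -> x.1.2 = x.2) ->
  r = c /\ forall x, (0 < m (pos x))%N -> x.1.2 = r.
Proof.
elim: w => [|b w IH] r c m.
  rewrite mcoeff_wordmx_nil pnatr_eq0 eqb0 negbK => /andP[/eqP-> /eqP->] _.
  by split=> // x; rewrite mnm0E.
case/mcoeff_wordmx_cons_neq0 => l [lem nz] loops.
have rl : r = l by apply: (loops (b, r, l)); rewrite lt0n -lep1mP.
have sub_pos x : (0 < (m - U_(pos (b, r, l)))%MM (pos x) -> 0 < m (pos x))%N.
  by rewrite mnmBE; lia.
have [lc loopsl] := IH _ _ _ nz (fun x mx => loops x (sub_pos x mx)).
split=> [|x mx]; first by rewrite rl.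
case: (eqVneq x (b, r, l)) => [-> //|xne].
rewrite rl; apply: loopsl.
by rewrite mnmBE mnm1E (inj_eq pos_inj) eq_sym (negbTE xne) subn0.
Qed.

Lemma mcoeff_wordmx_diag b0 N w : forall a b,
  (wordmx w N N)@_(mono2 (pos (b0, N, N)) (pos (~~ b0, N, N)) a b) =
  ((count_mem b0 w == a) && (count_mem (~~ b0) w == b))%:R.
Proof.
elim: w => [|x w IH] a b.
  by rewrite mcoeff_wordmx_nil eqxx mono2_eq0 /= ![(0%N == _)]eq_sym.
rewrite mcoeff_wordmx_cons (bigD1 N) //= big1 ?addr0; last first.
  move=> l lN; rewrite lep1_mono2 !(inj_eq pos_inj) !xpair_eqE [N == l]eq_sym (negbTE lN).
  by rewrite !andbF.
rewrite lep1_mono2 !(inj_eq pos_inj) !xpair_eqE eqxx !andbT.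
have [<-|xb0] := eqVneq b0 x.
  have [nbb bnb] : (~~ b0 == b0) = false /\ (b0 == ~~ b0) = false by clear IH; case: b0.
  rewrite nbb bnb /= orbF add1n add0n.
  by case: a => [|a] //=; rewrite mono2_subl IH.
have xE : x = ~~ b0 by move: xb0; clear IH; case: x; case: b0.
rewrite xE eqxx /= add1n add0n.
by case: b => [|b]; rewrite /= ?andbF // mono2_subr IH.
Qed.
End WordWalks.

Lemma mcoeff_nceval (R : realType) n k (p : ncpoly R) (X Y : 'M[{mpoly R[n]}]_k) r c m :
  (nceval p X Y r c)@_m = \sum_(l < (ncbound p).+1) \sum_(w : l.-tuple bool)
     nccoef p w * (ncword_eval X Y w r c)@_m.
Proof.
rewrite /nceval summxE raddf_sum; apply: eq_bigr => l _.
by rewrite summxE raddf_sum; apply: eq_bigr => w _; rewrite mxE; apply: mcoeffCM.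
Qed.

Lemma mcoeff_ncrep_diag (R : realType) k (pos : bool * 'I_k * 'I_k -> 'I_(2 * k ^ 2))
    (p : ncpoly R) b N a c : injective pos ->
  (ncrep pos p N N)@_(mono2 (pos (b, N, N)) (pos (~~ b, N, N)) a c) =
  \sum_(l < (ncbound p).+1) \sum_(w : l.-tuple bool)
     nccoef p w * ((count_mem b w == a) && (count_mem (~~ b) w == c))%:R.
Proof.
move=> pos_inj; rewrite mcoeff_nceval; apply: eq_bigr => l _; apply: eq_bigr => w _.
by rewrite mcoeff_wordmx_diag.
Qed.

(* At the vertex [ri] the [s] outgoing copies of the first edge can only be
   balanced by at most [t + 1 < s] incoming ones unless the edge is a loop;
   then at [rj] the same holds with [t >= 2] against at most one incoming edge. *)
Lemma walk_balance_loops (T : eqType) (ri ci rj cj r c : T) s t :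
  (2 <= t)%N -> (t + 2 <= s)%N ->
  (forall v, s * (ri == v) + t * (rj == v) + (c == v) =
             s * (ci == v) + t * (cj == v) + (r == v))%N ->
  ri = ci /\ rj = cj.
Proof.
move=> t2 st balance.
have rici : ri = ci.
  apply/eqP; apply: contraT => neq; move: (balance ri).
  rewrite eqxx [ci == ri]eq_sym (negbTE neq).
  by case: (rj == ri); case: (cj == ri); case: (c == ri); case: (r == ri) => /=; lia.
split=> //; apply/eqP; apply: contraT => neq; move: (balance rj).
rewrite -rici eqxx [cj == rj]eq_sym (negbTE neq).
by case: (ri == rj); case: (c == rj); case: (r == rj) => /=; lia.
Qed.

Theorem lemma2p16 (R : realType) (k : nat) (hk : (0 < k)%N)
  (pos : bool * 'I_k * 'I_k -> 'I_(2 * k ^ 2)) (hpos : bijective pos)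
  (p : ncpoly R) (hdeg : (1 < ncdeg p)%N)
  (i j : 'I_(2 * k ^ 2)) (hij : i != j) (e : R) (he : e != 0)
  (s t : nat) (ht : (2 <= t)%N) (hs : (t + 2 <= s)%N)
  (r0 c0 : 'I_k) (hterm : (ncrep pos p r0 c0)@_(mono2 i j s t) = e) :
  exists (a : 'I_k) (b : bool),
    [/\ pos (b, a, a) = i, pos (~~ b, a, a) = j &
        forall n : 'I_k,
          (ncrep pos p n n)@_(mono2 (pos (b, n, n)) (pos (~~ b, n, n)) s t) = e].
Proof.
have pos_inj : injective pos := bij_inj hpos.
have pos_onto y : exists x, pos x = y by case: hpos => g _ gK; exists (g y).
have [[[bi ri] ci] iE] := pos_onto i; have [[[bj rj] cj] jE] := pos_onto j.
subst i j.
have [w nz] : exists w, (ncword_eval (varmx R pos false) (varmx R pos true) w r0 c0)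
    @_(mono2 (pos (bi, ri, ci)) (pos (bj, rj, cj)) s t) != 0.
  move: he; rewrite -hterm mcoeff_nceval => /sum_neq0[l /sum_neq0[w]].
  by rewrite mulf_eq0 negb_or => /andP[_ nz]; exists w.
have [ciE cjE] : ri = ci /\ rj = cj.
  apply: (walk_balance_loops (r := r0) (c := c0) ht hs) => v.
  by have := mcoeff_wordmx_balance pos_inj nz v; rewrite !out_deg_mono2 // !in_deg_mono2.
subst ci cj.
have [c0E diag] : r0 = c0 /\ forall x,
    (0 < mono2 (pos (bi, ri, ri)) (pos (bj, rj, rj)) s t (pos x))%N -> x.1.2 = r0.
  apply: (mcoeff_wordmx_loops pos_inj nz) => x.
  rewrite mono2E !(inj_eq pos_inj).
  by case: eqP => [<- //|_]; case: eqP => [<- //|_]; rewrite !muln0.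
have riE : ri = r0 by apply: (diag (bi, ri, ri)); rewrite mono2E eqxx; lia.
have rjE : rj = r0 by apply: (diag (bj, rj, rj)); rewrite mono2E eqxx; lia.
subst c0 ri rj.
have bij : bi != bj by apply: contraNneq hij => ->.
have bjE : bj = ~~ bi by clear - bij; case: bi bj bij => -[].
exists r0, bi; split=> [||N]; rewrite ?bjE //.
by rewrite -hterm bjE !mcoeff_ncrep_diag.
Qed.
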